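(* Let $G=G_1\ast\cdots\ast G_k\ast F_N$ be a countable group ($F_N$ free of finite rank), $\mathcal{F}=\{[G_1],\dots,[G_k]\}$. Let $T$ be a minimal $(G,\mathcal{F})$-tree and $(T_n)_{n\in\mathbb{N}}$ a sequence of minimal $(G,\mathcal{F})$-trees converging to $T$ in the equivariant Gromov–Hausdorff topology. Let $g\in G$ and assume some power $g^p$ ($p\ge 1$) fixes a nondegenerate arc $I$ in $T$. If $g$ is hyperbolic in $T_n$ for all sufficiently large $n$, then $g$ fixes $I$.
   Context: Peripheral: conjugate into some $G_i$. $(G,\mathcal{F})$-tree: $\mathbb{R}$-tree with isometric $G$-action where every peripheral subgroup fixes a unique point; minimal: no proper nonempty invariant subtree. $g$ is hyperbolic if it fixes no point. Equivariant Gromov–Hausdorff convergence: for every finite $K\subset T$, finite $P\subset G$, $\epsilon>0$, for all large $n$ there are finite $K_n\subset T_n$ and $R\subseteq K\times K_n$ with surjective projections such that $|d_T(gx,hy)-d_{T_n}(gx',hy')|<\epsilon$ for all $(x,x'),(y,y')\in R$, $g,h\in P$. *)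

From Stdlib Require Import Reals Lra Lia List ZArith.
Open Scope R_scope.

Record Grp := {
  gcar :> Type;
  gmul : gcar -> gcar -> gcar;
  ginv : gcar -> gcar;
  gone : gcar;
  gmul_assoc : forall a b c, gmul a (gmul b c) = gmul (gmul a b) c;
  gmul_1l : forall a, gmul gone a = a;
  gmul_1r : forall a, gmul a gone = a;
  gmul_Vl : forall a, gmul (ginv a) a = gone;
  gmul_Vr : forall a, gmul a (ginv a) = gone
}.
Arguments gmul {_}. Arguments ginv {_}. Arguments gone {_}.

Fixpoint gpow {G : Grp} (g : G) (p : nat) : G :=
  match p with O => gone | S q => gmul g (gpow g q) end.

Definition gzpow {G : Grp} (g : G) (m : Z) : G :=
  match m with
  | Z0 => gone
  | Zpos q => gpow g (Pos.to_nat q)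
  | Zneg q => ginv (gpow g (Pos.to_nat q))
  end.

Definition is_subgroup {G : Grp} (H : G -> Prop) : Prop :=
  H gone /\ (forall a b, H a -> H b -> H (gmul a b)) /\ (forall a, H a -> H (ginv a)).

(* product of a word (list of (factor index, letter)) *)
Fixpoint word_prod {G : Grp} (w : list (nat * G)) : G :=
  match w with nil => gone | (_, a) :: w' => gmul a (word_prod w') end.

Fixpoint alternating {G : Grp} (w : list (nat * G)) : Prop :=
  match w with
  | (i, _) :: (((j, _) :: _) as w') => i <> j /\ alternating w'
  | _ => True
  end.

(* The factors of G = G_1 * ... * G_k * F_N, F_N = <x_0> * ... * <x_{N-1}>:
   index j < k gives G_j (here Gi j), index k + j (j < N) gives <x_j>. *)
Definition factor {G : Grp} (k : nat) (Gi : nat -> G -> Prop) (x : nat -> G)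
  (j : nat) (a : G) : Prop :=
  if Nat.ltb j k then Gi j a else exists m : Z, a = gzpow (x (j - k)%nat) m.

(* G is the internal free product G_0 * ... * G_{k-1} * F_N where F_N is
   free on x_0,...,x_{N-1}: the G_i are subgroups, the x_j have infinite
   order, the factors generate G, and every nonempty reduced word has
   nontrivial product (normal form theorem for free products). *)
Definition free_product_decomp (G : Grp) (k : nat) (Gi : nat -> G -> Prop)
  (N : nat) (x : nat -> G) : Prop :=
  (forall i, (i < k)%nat -> is_subgroup (Gi i)) /\
  (forall j, (j < N)%nat -> forall m : Z, m <> 0%Z -> gzpow (x j) m <> gone) /\
  (forall g : G, exists w : list (nat * G),
      (forall p, In p w -> (fst p < k + N)%nat /\ factor k Gi x (fst p) (snd p))
      /\ word_prod w = g) /\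
  (forall w : list (nat * G), w <> nil ->
      (forall p, In p w -> (fst p < k + N)%nat /\ factor k Gi x (fst p) (snd p)
                           /\ snd p <> gone) ->
      alternating w -> word_prod w <> gone).

Definition countable_type (A : Type) : Prop :=
  exists f : A -> nat, forall a b, f a = f b -> a = b.

Section Metric.
Variables (X : Type) (d : X -> X -> R).

Definition geodesic (x y : X) (s : R -> X) : Prop :=
  s 0 = x /\ s (d x y) = y /\
  forall u v, 0 <= u <= d x y -> 0 <= v <= d x y -> d (s u) (s v) = Rabs (u - v).

Definition arc (x y : X) (c : R -> X) : Prop :=
  c 0 = x /\ c 1 = y /\
  (forall u v, 0 <= u <= 1 -> 0 <= v <= 1 -> c u = c v -> u = v) /\
  (forall t, 0 <= t <= 1 -> forall eps, eps > 0 -> exists delta, delta > 0 /\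
     forall u, 0 <= u <= 1 -> Rabs (u - t) < delta -> d (c u) (c t) < eps).

Definition is_metric : Prop :=
  (forall x y, 0 <= d x y) /\ (forall x y, d x y = 0 <-> x = y) /\
  (forall x y, d x y = d y x) /\ (forall x y z, d x z <= d x y + d y z).

Definition is_Rtree : Prop :=
  is_metric /\
  (forall x y, exists s, geodesic x y s) /\
  (forall x y c s, arc x y c -> geodesic x y s ->
     forall z, (exists u, 0 <= u <= 1 /\ c u = z) <->
               (exists v, 0 <= v <= d x y /\ s v = z)).

Definition segment (x y z : X) : Prop := d x z + d z y = d x y.
End Metric.

Record GTree (G : Grp) := {
  tcar :> Type;
  tdist : tcar -> tcar -> R;
  tact : G -> tcar -> tcar;
  tree_Rtree : is_Rtree tcar tdist;
  tact_one : forall x, tact gone x = x;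
  tact_mul : forall g h x, tact (gmul g h) x = tact g (tact h x);
  tact_isom : forall g x y, tdist (tact g x) (tact g y) = tdist x y
}.
Arguments tdist {_} _. Arguments tact {_} _.

Definition GF_tree {G : Grp} (k : nat) (Gi : nat -> G -> Prop) (T : GTree G) : Prop :=
  forall i, (i < k)%nat -> forall g : G,
    exists x : T, (forall h, Gi i h -> tact T (gmul g (gmul h (ginv g))) x = x) /\
      forall y : T, (forall h, Gi i h -> tact T (gmul g (gmul h (ginv g))) y = y) -> y = x.

Definition subtree {G : Grp} (T : GTree G) (S : T -> Prop) : Prop :=
  (exists x, S x) /\
  forall x y z, S x -> S y -> segment T (tdist T) x y z -> S z.

Definition minimal_tree {G : Grp} (T : GTree G) : Prop :=
  forall S : T -> Prop, subtree T S -> (forall g x, S x -> S (tact T g x)) ->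
    forall x, S x.

Definition hyperbolic_in {G : Grp} (T : GTree G) (g : G) : Prop :=
  forall x : T, tact T g x <> x.

Definition fixes_arc {G : Grp} (T : GTree G) (g : G) (a b : T) : Prop :=
  forall z, segment T (tdist T) a b z -> tact T g z = z.

Definition GH_converges {G : Grp} (Tn : nat -> GTree G) (T : GTree G) : Prop :=
  forall (K : list T) (P : list G) (eps : R), eps > 0 ->
  exists n0 : nat, forall n, (n >= n0)%nat ->
  exists (Kn : list (Tn n)) (Rel : list (T * Tn n)),
    (forall q, In q Rel -> In (fst q) K /\ In (snd q) Kn) /\
    (forall x, In x K -> exists x', In (x, x') Rel) /\
    (forall x', In x' Kn -> exists x, In (x, x') Rel) /\
    (forall x x' y y' g h, In (x, x') Rel -> In (y, y') Rel -> In g P -> In h P ->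
       Rabs (tdist T (tact T g x) (tact T h y)
             - tdist (Tn n) (tact (Tn n) g x') (tact (Tn n) h y')) < eps).

(* If [g^p] fixes [I] but [g] moves a point [z] of [I] by [D > 0], take an
   approximation [z'] of [z] in a tree [T_n] in which [g] is hyperbolic: then
   [d(z', g z') > D/2] while [d(z', g^p z') < D/2]. This is impossible, because
   an isometry of an R-tree without fixed point displaces every point at least as
   much under its powers as under itself: R-trees are 0-hyperbolic, so the orbit
   of a point under such an isometry recedes linearly. *)

From Stdlib Require Import Reals List Lra Lia Classical.
Open Scope R_scope.

Lemma unit_lipschitz_injective_arc (X : Type) (d : X -> X -> R) (x y : X)
    (c : R -> X) (L : R) :
  0 < L -> c 0 = x -> c L = y ->
  (forall u v, 0 <= u <= L -> 0 <= v <= L -> c u = c v -> u = v) ->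
  (forall u v, 0 <= u <= L -> 0 <= v <= L -> d (c u) (c v) <= Rabs (u - v)) ->
  arc X d x y (fun v => c (v * L)).
Proof.
  intros HL c0 cL c_inj c_lip.
  assert (scaled : forall v, 0 <= v <= 1 -> 0 <= v * L <= L).
  { intros v Hv; split; [apply Rmult_le_pos; lra|].
    rewrite <- (Rmult_1_l L) at 2; apply Rmult_le_compat_r; lra. }
  split; [rewrite Rmult_0_l; exact c0|].
  split; [rewrite Rmult_1_l; exact cL|].
  split.
  - intros u v Hu Hv Huv.
    apply (Rmult_eq_reg_r L); [|lra].
    exact (c_inj _ _ (scaled u Hu) (scaled v Hv) Huv).
  - intros t Ht eps Heps; exists (eps / L); split; [apply Rdiv_lt_0_compat; lra|].
    intros u Hu Hut.
    eapply Rle_lt_trans; [exact (c_lip _ _ (scaled u Hu) (scaled t Ht))|].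
    rewrite <- Rmult_minus_distr_r, Rabs_mult, (Rabs_pos_eq L) by lra.
    apply (Rmult_lt_compat_r L) in Hut; [|lra].
    replace (eps / L * L) with eps in Hut by (field; lra); exact Hut.
Qed.

Section RTree.
Variables (X : Type) (d : X -> X -> R).
Hypothesis HX : is_Rtree X d.

Lemma dist_nonneg x y : 0 <= d x y.
Proof. destruct HX as [[h _] _]; apply h. Qed.

Lemma dist_eq_0 x y : d x y = 0 <-> x = y.
Proof. destruct HX as [[_ [h _]] _]; apply h. Qed.

Lemma dist_sym x y : d x y = d y x.
Proof. destruct HX as [[_ [_ [h _]]] _]; apply h. Qed.

Lemma dist_triangle x y z : d x z <= d x y + d y z.
Proof. destruct HX as [[_ [_ [_ h]]] _]; apply h. Qed.

Lemma dist_refl x : d x x = 0.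
Proof. apply dist_eq_0; reflexivity. Qed.

Lemma dist_pos x y : x <> y -> 0 < d x y.
Proof.
  intros Hxy; destruct (Rle_lt_or_eq_dec _ _ (dist_nonneg x y)) as [h|h]; [exact h|].
  exfalso; apply Hxy, dist_eq_0; symmetry; exact h.
Qed.

Lemma geodesic_exists x y : exists s, geodesic X d x y s.
Proof. destruct HX as [_ [h _]]; apply h. Qed.

Section Geodesic.
Variables (x y : X) (s : R -> X).
Hypothesis Hs : geodesic X d x y s.

Lemma geodesic_start : s 0 = x.
Proof. apply Hs. Qed.

Lemma geodesic_end : s (d x y) = y.
Proof. apply Hs. Qed.

Lemma geodesic_dist u v : 0 <= u <= d x y -> 0 <= v <= d x y ->
  d (s u) (s v) = Rabs (u - v).
Proof. apply Hs. Qed.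

Lemma geodesic_dist_start u : 0 <= u <= d x y -> d x (s u) = u.
Proof.
  intros Hu; rewrite <- geodesic_start, geodesic_dist by (pose proof (dist_nonneg x y); lra).
  rewrite Rabs_minus_sym, Rabs_pos_eq; lra.
Qed.

Lemma geodesic_dist_end u : 0 <= u <= d x y -> d (s u) y = d x y - u.
Proof.
  intros Hu; rewrite <- geodesic_end at 1.
  rewrite geodesic_dist by (pose proof (dist_nonneg x y); lra).
  rewrite Rabs_minus_sym, Rabs_pos_eq; lra.
Qed.

Lemma geodesic_inj u v : 0 <= u <= d x y -> 0 <= v <= d x y -> s u = s v -> u = v.
Proof.
  intros Hu Hv Huv.
  pose proof (geodesic_dist_start u Hu); pose proof (geodesic_dist_start v Hv).
  rewrite Huv in *; lra.
Qed.

Lemma geodesic_restrict t : 0 <= t <= d x y -> geodesic X d x (s t) s.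
Proof.
  intros Ht; unfold geodesic; rewrite (geodesic_dist_start t Ht).
  split; [exact geodesic_start|]; split; [reflexivity|].
  intros u v Hu Hv; apply geodesic_dist; lra.
Qed.

End Geodesic.

Lemma arc_point_on_geodesic x y c s u : arc X d x y c -> geodesic X d x y s ->
  0 <= u <= 1 -> exists v, 0 <= v <= d x y /\ s v = c u.
Proof.
  intros Hc Hs Hu; destruct HX as [_ [_ Himg]].
  apply (Himg x y c s Hc Hs); exists u; auto.
Qed.

Lemma arc_point_segment x y c u : arc X d x y c -> 0 <= u <= 1 ->
  segment X d x y (c u).
Proof.
  intros Hc Hu; destruct (geodesic_exists x y) as [s Hs].
  destruct (arc_point_on_geodesic x y c s u Hc Hs Hu) as [v [Hv <-]].
  unfold segment; rewrite (geodesic_dist_start x y s Hs v Hv),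
    (geodesic_dist_end x y s Hs v Hv); ring.
Qed.

(* Two geodesics issued from [w] that meet at time [t] coincide before [t]:
   [s2] on [[0, t]] is an arc from [w] to [s1 t], hence runs along [s1]. *)
Lemma geodesic_prefix_eq w x y s1 s2 t :
  geodesic X d w x s1 -> geodesic X d w y s2 ->
  0 <= t <= d w x -> t <= d w y -> s1 t = s2 t ->
  forall u, 0 <= u <= t -> s1 u = s2 u.
Proof.
  intros G1 G2 Ht Hty Heq u Hu.
  destruct (Req_dec t 0) as [->|Ht0].
  { replace u with 0 by lra; now rewrite (geodesic_start _ _ _ G1), (geodesic_start _ _ _ G2). }
  assert (Hdt : d w (s1 t) = t) by exact (geodesic_dist_start _ _ _ G1 t Ht).
  assert (Harc : arc X d w (s1 t) (fun v => s2 (v * t))).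
  { apply unit_lipschitz_injective_arc; [lra|exact (geodesic_start _ _ _ G2)|now symmetry| |].
    - intros a b Ha Hb; apply (geodesic_inj _ _ _ G2); lra.
    - intros a b Ha Hb; rewrite (geodesic_dist _ _ _ G2) by lra; lra. }
  destruct (arc_point_on_geodesic _ _ _ _ (u / t) Harc (geodesic_restrict _ _ _ G1 t Ht))
    as [v [Hv Hsv]].
  { split; [apply Rmult_le_pos; [lra|left; apply Rinv_0_lt_compat; lra]|].
    apply (Rmult_le_reg_r t); [lra|]; field_simplify; lra. }
  replace (u / t * t) with u in Hsv by (field; lra).
  rewrite Hdt in Hv.
  assert (Hvu : v = u).
  { rewrite <- (geodesic_dist_start _ _ _ G1 v), <- (geodesic_dist_start _ _ _ G2 u) by lra.
    now rewrite Hsv. }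
  subst v; exact Hsv.
Qed.

Lemma geodesics_last_common_time w x y s1 s2 :
  geodesic X d w x s1 -> geodesic X d w y s2 ->
  exists ts, 0 <= ts <= Rmin (d w x) (d w y) /\ s1 ts = s2 ts /\
    forall t, 0 <= t <= Rmin (d w x) (d w y) -> s1 t = s2 t -> t <= ts.
Proof.
  intros G1 G2; set (m := Rmin (d w x) (d w y)).
  assert (Hm0 : 0 <= m) by (apply Rmin_glb; apply dist_nonneg).
  assert (Hmx : m <= d w x) by apply Rmin_l.
  assert (Hmy : m <= d w y) by apply Rmin_r.
  set (E := fun t => 0 <= t <= m /\ s1 t = s2 t).
  assert (E0 : E 0).
  { split; [lra|]; now rewrite (geodesic_start _ _ _ G1), (geodesic_start _ _ _ G2). }
  destruct (completeness E) as [ts [Hub Hlub]]; [exists m; intros t [Ht _]; lra|now exists 0|].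
  assert (Hts : 0 <= ts <= m) by (split; [apply Hub, E0|apply Hlub; intros t [Ht _]; lra]).
  exists ts; split; [exact Hts|]; split; [|intros t Ht Heq; apply Hub; split; auto].
  (* the agreement set is closed: a gap at [ts] would persist on a left neighbourhood *)
  apply NNPP; intro Hne.
  set (del := d (s1 ts) (s2 ts)).
  assert (Hdel : 0 < del) by (apply dist_pos, Hne).
  destruct (classic (exists t, E t /\ ts - del / 2 < t)) as [[t [[Ht Hst] Hlt]]|Hno].
  - assert (t <= ts) by (apply Hub; split; auto).
    pose proof (dist_triangle (s1 ts) (s1 t) (s2 ts)) as Htri.
    rewrite Hst in Htri at 2; rewrite (geodesic_dist _ _ _ G1), (geodesic_dist _ _ _ G2) in Htri by lra.
    rewrite Rabs_pos_eq, Rabs_minus_sym, Rabs_pos_eq in Htri by lra.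
    unfold del in *; lra.
  - assert (ts <= ts - del / 2); [|lra].
    apply Hlub; intros t Et; apply Rnot_lt_le; intro Hlt; apply Hno; exists t; auto.
Qed.

Section Branch.
Variables (w x y : X) (s1 s2 : R -> X) (ts : R).
Hypotheses (G1 : geodesic X d w x s1) (G2 : geodesic X d w y s2).
Hypotheses (Hts : 0 <= ts <= Rmin (d w x) (d w y)) (Hmeet : s1 ts = s2 ts).
Hypothesis Hlast : forall t, 0 <= t <= Rmin (d w x) (d w y) -> s1 t = s2 t -> t <= ts.

Let ts_le_x : ts <= d w x.
Proof. pose proof (Rmin_l (d w x) (d w y)); lra. Qed.

Let ts_le_y : ts <= d w y.
Proof. pose proof (Rmin_r (d w x) (d w y)); lra. Qed.

(* Back along [s1] from [x] to the branch point [s1 ts], then out along [s2]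
   to [y]; parametrised by arc length on [[0, d w x + d w y - 2 ts]]. *)
Definition branch_path (v : R) : X :=
  if Rle_dec v (d w x - ts) then s1 (d w x - v) else s2 (ts + v - (d w x - ts)).

Lemma branch_dist_le a b : ts <= a <= d w x -> ts <= b <= d w y ->
  d (s1 a) (s2 b) <= (a - ts) + (b - ts).
Proof.
  intros Ha Hb; eapply Rle_trans; [apply (dist_triangle _ (s1 ts))|].
  rewrite Hmeet at 2; rewrite (geodesic_dist _ _ _ G1), (geodesic_dist _ _ _ G2) by lra.
  rewrite Rabs_pos_eq, Rabs_minus_sym, Rabs_pos_eq by lra; lra.
Qed.

Lemma branch_neq a b : ts <= a <= d w x -> ts < b <= d w y -> s1 a <> s2 b.
Proof.
  intros Ha Hb Hab.
  assert (a = b).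
  { rewrite <- (geodesic_dist_start _ _ _ G1 a), <- (geodesic_dist_start _ _ _ G2 b) by lra.
    now rewrite Hab. }
  subst b; pose proof (Hlast a ltac:(split; [lra|apply Rmin_glb; lra]) Hab); lra.
Qed.

Lemma branch_path_inj u v :
  0 <= u <= d w x + d w y - 2 * ts -> 0 <= v <= d w x + d w y - 2 * ts ->
  branch_path u = branch_path v -> u = v.
Proof.
  unfold branch_path; intros Hu Hv.
  destruct (Rle_dec u (d w x - ts)); destruct (Rle_dec v (d w x - ts)); intro Huv.
  - enough (d w x - u = d w x - v) by lra.
    apply (geodesic_inj _ _ _ G1); [lra|lra|exact Huv].
  - exfalso; apply (branch_neq (d w x - u) (ts + v - (d w x - ts))); [lra|lra|exact Huv].
  - exfalso; apply (branch_neq (d w x - v) (ts + u - (d w x - ts))); [lra|lra|now symmetry].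
  - enough (ts + u - (d w x - ts) = ts + v - (d w x - ts)) by lra.
    apply (geodesic_inj _ _ _ G2); [lra|lra|exact Huv].
Qed.

Lemma branch_path_dist_le u v :
  0 <= u <= d w x + d w y - 2 * ts -> 0 <= v <= d w x + d w y - 2 * ts ->
  d (branch_path u) (branch_path v) <= Rabs (u - v).
Proof.
  unfold branch_path; intros Hu Hv.
  destruct (Rle_dec u (d w x - ts)); destruct (Rle_dec v (d w x - ts)).
  - rewrite (geodesic_dist _ _ _ G1) by lra.
    replace (d w x - u - (d w x - v)) with (v - u) by ring.
    rewrite Rabs_minus_sym; apply Rle_refl.
  - rewrite Rabs_minus_sym, Rabs_pos_eq by lra.
    eapply Rle_trans; [apply branch_dist_le; lra|lra].
  - rewrite dist_sym, Rabs_pos_eq by lra.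
    eapply Rle_trans; [apply branch_dist_le; lra|lra].
  - rewrite (geodesic_dist _ _ _ G2) by lra.
    replace (ts + u - (d w x - ts) - (ts + v - (d w x - ts))) with (u - v) by ring.
    apply Rle_refl.
Qed.

Lemma branch_path_end : branch_path (d w x + d w y - 2 * ts) = y.
Proof.
  unfold branch_path; destruct (Rle_dec (d w x + d w y - 2 * ts) (d w x - ts)).
  - replace (d w x - (d w x + d w y - 2 * ts)) with ts by lra.
    rewrite Hmeet; replace ts with (d w y) by lra; exact (geodesic_end _ _ _ G2).
  - replace (ts + (d w x + d w y - 2 * ts) - (d w x - ts)) with (d w y) by ring.
    exact (geodesic_end _ _ _ G2).
Qed.

(* The branch path is an arc, so the branch point lies on [[x, y]]. *)
Lemma geodesics_branch_dist : d x y = d w x + d w y - 2 * ts.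
Proof.
  set (L := d w x + d w y - 2 * ts).
  destruct (Req_dec L 0) as [HL|HL].
  { assert (Hxy : x = y); [|rewrite Hxy, dist_refl; unfold L in *; lra].
    rewrite <- (geodesic_end _ _ _ G1), <- (geodesic_end _ _ _ G2).
    replace (d w x) with ts by (unfold L in HL; lra).
    replace (d w y) with ts by (unfold L in HL; lra); exact Hmeet. }
  assert (Harc : arc X d x y (fun v => branch_path (v * L))).
  { apply unit_lipschitz_injective_arc.
    - unfold L in *; lra.
    - unfold branch_path; destruct (Rle_dec 0 (d w x - ts)) as [_|h]; [|lra].
      rewrite Rminus_0_r; exact (geodesic_end _ _ _ G1).
    - exact branch_path_end.
    - exact branch_path_inj.
    - exact branch_path_dist_le. }
  assert (Hseg : segment X d x y (s1 ts)).
  { replace (s1 ts) with (branch_path ((d w x - ts) / L * L)).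
    - refine (arc_point_segment x y _ _ Harc _).
      split; [apply Rmult_le_pos; [lra|left; apply Rinv_0_lt_compat; unfold L in *; lra]|].
      apply (Rmult_le_reg_r L); [unfold L in *; lra|].
      field_simplify; [unfold L; lra|exact HL].
    - replace ((d w x - ts) / L * L) with (d w x - ts) by (field; exact HL).
      unfold branch_path; destruct (Rle_dec (d w x - ts) (d w x - ts)) as [_|h]; [|lra].
      f_equal; ring. }
  unfold segment in Hseg.
  rewrite dist_sym, (geodesic_dist_end _ _ _ G1) in Hseg by lra.
  rewrite Hmeet, (geodesic_dist_end _ _ _ G2) in Hseg by lra.
  unfold L; lra.
Qed.

End Branch.

Definition gromov_product (x y w : X) : R := (d w x + d w y - d x y) / 2.

Lemma gromov_product_le_dist x y w : gromov_product x y w <= d w x.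
Proof. unfold gromov_product; pose proof (dist_triangle w x y); lra. Qed.

Lemma gromov_product_nonneg x y w : 0 <= gromov_product x y w.
Proof.
  unfold gromov_product; pose proof (dist_triangle x w y); rewrite (dist_sym x w) in *; lra.
Qed.

Lemma gromov_product_sym x y w : gromov_product x y w = gromov_product y x w.
Proof. unfold gromov_product; rewrite (dist_sym x y); lra. Qed.

Lemma geodesics_agree_to_gromov_product w x y s1 s2 :
  geodesic X d w x s1 -> geodesic X d w y s2 ->
  forall t, 0 <= t <= gromov_product x y w -> s1 t = s2 t.
Proof.
  intros G1 G2 t Ht.
  destruct (geodesics_last_common_time w x y s1 s2 G1 G2) as [ts [Hts [Heq Hlast]]].
  pose proof (geodesics_branch_dist w x y s1 s2 ts G1 G2 Hts Heq Hlast) as Hdxy.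
  pose proof (Rmin_l (d w x) (d w y)); pose proof (Rmin_r (d w x) (d w y)).
  apply (geodesic_prefix_eq w x y s1 s2 ts G1 G2); [lra|lra|exact Heq|].
  unfold gromov_product in Ht; lra.
Qed.

Lemma gromov_product_four_point x y z w :
  Rmin (gromov_product x y w) (gromov_product y z w) <= gromov_product x z w.
Proof.
  destruct (geodesic_exists w x) as [sx Gx].
  destruct (geodesic_exists w y) as [sy Gy].
  destruct (geodesic_exists w z) as [sz Gz].
  set (t := Rmin (gromov_product x y w) (gromov_product y z w)).
  assert (t <= gromov_product x y w) by apply Rmin_l.
  assert (t <= gromov_product y z w) by apply Rmin_r.
  assert (0 <= t) by (apply Rmin_glb; apply gromov_product_nonneg).
  pose proof (gromov_product_le_dist x y w).
  pose proof (gromov_product_le_dist z y w) as Hzy; rewrite gromov_product_sym in Hzy.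
  assert (exy : sx t = sy t) by (apply (geodesics_agree_to_gromov_product w x y); auto; lra).
  assert (eyz : sy t = sz t) by (apply (geodesics_agree_to_gromov_product w y z); auto; lra).
  pose proof (dist_triangle x (sx t) z) as Htri.
  rewrite (dist_sym x (sx t)), (geodesic_dist_end _ _ _ Gx), exy, eyz,
    (geodesic_dist_end _ _ _ Gz) in Htri by lra.
  unfold gromov_product in *; lra.
Qed.

Section Isometry.
Variable f : X -> X.
Hypothesis f_isom : forall x y, d (f x) (f y) = d x y.

(* The midpoint [m] of [[y, f y]] is fixed: two applications of the four-point
   condition at the base point [f y] squeeze [d m (f m)] to [0]. *)
Lemma isometry_fixpoint_of_short_square y :
  d y (f (f y)) <= d y (f y) -> exists m, f m = m.
Proof.
  intros Hsq; set (D := d y (f y)).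
  destruct (geodesic_exists y (f y)) as [s Gs].
  pose proof (dist_nonneg y (f y)).
  set (m := s (D / 2)); exists m.
  assert (e1 : d y m = D / 2) by (apply (geodesic_dist_start _ _ _ Gs); unfold D; lra).
  assert (e2 : d m (f y) = D / 2) by (unfold m; rewrite (geodesic_dist_end _ _ _ Gs); unfold D; lra).
  assert (e3 : d (f y) (f m) = D / 2) by (rewrite f_isom; exact e1).
  assert (e4 : d (f (f y)) (f m) = D / 2) by (rewrite f_isom, dist_sym; exact e2).
  assert (e5 : d (f y) (f (f y)) = D) by (rewrite f_isom; reflexivity).
  pose proof (gromov_product_four_point m y (f (f y)) (f y)) as F1.
  pose proof (gromov_product_four_point m (f (f y)) (f m) (f y)) as F2.
  unfold gromov_product in F1, F2.
  rewrite (dist_sym (f y) m), (dist_sym (f y) y), (dist_sym m y), e2, e1, e5 in F1.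
  rewrite (dist_sym (f y) m), e2, e3, e4, e5 in F2.
  assert (Hmffy : D / 2 <= (D / 2 + D - d m (f (f y))) / 2).
  { eapply Rle_trans; [|exact F1]; apply Rmin_glb; unfold D in *; lra. }
  assert (Hmfm : d m (f m) <= 0).
  { enough (D / 2 <= (D / 2 + D / 2 - d m (f m)) / 2) by lra.
    eapply Rle_trans; [|exact F2]; apply Rmin_glb; lra. }
  symmetry; apply dist_eq_0; pose proof (dist_nonneg m (f m)); lra.
Qed.

Lemma fixpoint_free_dist_square_gt (Hfree : forall m, f m <> m) y :
  d y (f y) < d y (f (f y)).
Proof.
  apply Rnot_le_lt; intro Hle.
  destruct (isometry_fixpoint_of_short_square y Hle) as [m Hm]; exact (Hfree m Hm).
Qed.

Lemma dist_iter_add y i j :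
  d (Nat.iter i f y) (Nat.iter (i + j) f y) = d y (Nat.iter j f y).
Proof. induction i as [|i IH]; [reflexivity|]; simpl; rewrite f_isom; exact IH. Qed.

(* With [y_i := f^i y], the invariant is that [(y_0 | y_n)] seen from [y_(n+1)]
   exceeds [c = (y_n | y_(n+2))] seen from [y_(n+1)]; 0-hyperbolicity then forces
   [(y_0 | y_(n+2)) = c], i.e. each step adds [e - D] to the distance from [y_0]. *)
Lemma fixpoint_free_dist_iter (Hfree : forall m, f m <> m) y n :
  d y (Nat.iter (S n) f y) = d y (f y) + INR n * (d y (f (f y)) - d y (f y)).
Proof.
  set (D := d y (f y)); set (e := d y (f (f y))).
  set (o := fun i => Nat.iter i f y).
  assert (HD : 0 <= D) by apply dist_nonneg.
  assert (He : D < e) by exact (fixpoint_free_dist_square_gt Hfree y).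
  set (c := (D + D - e) / 2).
  assert (Hstep : forall i, d (o i) (o (S i)) = D /\ d (o i) (o (S (S i))) = e).
  { intro i; split.
    - unfold o; replace (S i) with (i + 1)%nat by lia; apply dist_iter_add.
    - unfold o; replace (S (S i)) with (i + 2)%nat by lia; apply dist_iter_add. }
  assert (Hc : forall i, gromov_product (o i) (o (S (S i))) (o (S i)) = c).
  { intro i; destruct (Hstep i) as [h1 h2]; destruct (Hstep (S i)) as [h3 _].
    unfold gromov_product, c; rewrite dist_sym, h1, h3, h2; lra. }
  enough (Hinv : forall k, d (o O) (o (S k)) = D + INR k * (e - D) /\
                           gromov_product (o O) (o k) (o (S k)) > c) by exact (proj1 (Hinv n)).
  clear n; intro n; induction n as [|n [IH1 IH2]].
  - destruct (Hstep O) as [h1 _]; split; [rewrite h1; simpl; lra|].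
    unfold gromov_product, c; rewrite dist_refl, (dist_sym (o 1%nat)), h1; lra.
  - destruct (Hstep (S n)) as [h3 _].
    pose proof (gromov_product_four_point (o n) (o O) (o (S (S n))) (o (S n))) as F1.
    pose proof (gromov_product_four_point (o O) (o n) (o (S (S n))) (o (S n))) as F2.
    rewrite Hc in F1, F2; rewrite gromov_product_sym in F1.
    assert (Hgp : gromov_product (o O) (o (S (S n))) (o (S n)) = c).
    { apply Rle_antisym.
      - apply Rnot_lt_le; intro Hlt; apply (Rlt_not_le _ _ (Rmin_glb_lt _ _ _ IH2 Hlt)), F1.
      - eapply Rle_trans; [|exact F2]; apply Rmin_glb; lra. }
    unfold gromov_product, c in Hgp, IH2 |- *.
    rewrite (dist_sym (o (S n)) (o O)), h3 in Hgp.
    rewrite (dist_sym (o (S (S n))) (o O)), (dist_sym (o (S (S n))) (o (S n))), h3, S_INR.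
    split; lra.
Qed.

Lemma fixpoint_free_displacement_le_iter (Hfree : forall m, f m <> m) y n :
  (n >= 1)%nat -> d y (f y) <= d y (Nat.iter n f y).
Proof.
  intros Hn; destruct n as [|n]; [lia|].
  rewrite (fixpoint_free_dist_iter Hfree).
  pose proof (fixpoint_free_dist_square_gt Hfree y).
  pose proof (pos_INR n); pose proof (Rmult_le_pos (INR n) (d y (f (f y)) - d y (f y))); lra.
Qed.

End Isometry.
End RTree.

Lemma tact_gpow (G : Grp) (T : GTree G) (g : G) (n : nat) (y : T) :
  tact T (gpow g n) y = Nat.iter n (tact T g) y.
Proof.
  induction n as [|n IH]; simpl; [apply tact_one|now rewrite tact_mul, IH].
Qed.

Lemma hyperbolic_displacement_le_pow (G : Grp) (T : GTree G) (g : G) (p : nat) (y : T) :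
  hyperbolic_in T g -> (p >= 1)%nat ->
  tdist T y (tact T g y) <= tdist T y (tact T (gpow g p) y).
Proof.
  intros Hg Hp; rewrite tact_gpow.
  apply (fixpoint_free_displacement_le_iter _ _ (tree_Rtree G T)); [apply tact_isom|exact Hg|exact Hp].
Qed.

Lemma GH_converges_point_approx (G : Grp) (Tn : nat -> GTree G) (T : GTree G)
    (z : T) (P : list G) (eps : R) :
  GH_converges Tn T -> eps > 0 ->
  exists n0, forall n, (n >= n0)%nat -> exists z' : Tn n,
    forall h h', In h P -> In h' P ->
      Rabs (tdist T (tact T h z) (tact T h' z)
            - tdist (Tn n) (tact (Tn n) h z') (tact (Tn n) h' z')) < eps.
Proof.
  intros Hconv Heps.
  destruct (Hconv (z :: nil) P eps Heps) as [n0 Hn0]; exists n0; intros n Hn.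
  destruct (Hn0 n Hn) as [Kn [Rel [_ [Hcover [_ Happrox]]]]].
  destruct (Hcover z (or_introl eq_refl)) as [z' Hz']; exists z'.
  intros h h' Hh Hh'; exact (Happrox z z' z z' h h' Hz' Hz' Hh Hh').
Qed.

Theorem lemma2p3 (G : Grp) (k : nat) (Gi : nat -> G -> Prop) (N : nat) (x : nat -> G)
  (HG : free_product_decomp G k Gi N x) (Hcount : countable_type G)
  (T : GTree G) (HT : GF_tree k Gi T) (HTmin : minimal_tree T)
  (Tn : nat -> GTree G)
  (HTn : forall n, GF_tree k Gi (Tn n) /\ minimal_tree (Tn n))
  (Hconv : GH_converges Tn T)
  (g : G) (p : nat) (Hp : (p >= 1)%nat) (a b : T) (Hab : a <> b)
  (Hfix : fixes_arc T (gpow g p) a b)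
  (Hhyp : exists n0 : nat, forall n, (n >= n0)%nat -> hyperbolic_in (Tn n) g) :
  fixes_arc T g a b.
Proof.
  intros z Hz.
  destruct (classic (tact T g z = z)) as [|Hmoved]; [assumption|exfalso].
  set (D := tdist T z (tact T g z)).
  assert (HD : 0 < D) by (apply (dist_pos _ _ (tree_Rtree G T)); auto).
  destruct Hhyp as [n0 Hn0].
  destruct (GH_converges_point_approx G Tn T z (gone :: g :: gpow g p :: nil) (D / 2) Hconv)
    as [n1 Hn1]; [lra|].
  set (n := max n0 n1).
  destruct (Hn1 n ltac:(lia)) as [z' Hz'].
  pose proof (Hz' gone g ltac:(simpl; auto) ltac:(simpl; auto)) as Hg.
  pose proof (Hz' gone (gpow g p) ltac:(simpl; auto) ltac:(simpl; auto)) as Hgp.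
  rewrite !tact_one in Hg, Hgp; rewrite (Hfix z Hz), (dist_refl _ _ (tree_Rtree G T)) in Hgp.
  pose proof (hyperbolic_displacement_le_pow G (Tn n) g p z' (Hn0 n ltac:(lia)) Hp).
  apply Rabs_def2 in Hg; apply Rabs_def2 in Hgp; unfold D in *; lra.
Qed.
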